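(* For all binary words $\mathfrak{s},\mathfrak{t}$ over $\{\mathsf{A},\mathsf{B}\}$, \[ \mathsf{P}(\mathfrak{s}\circ\mathfrak{t}) = \mathsf{P}_{\mathsf{A}}(\mathfrak{s})\,\mathsf{P}^{\mathsf{B}}(\mathfrak{t}) + \mathsf{P}_{\mathsf{B}}(\mathfrak{s})\,\mathsf{P}^{\mathsf{A}}(\mathfrak{t}) - 1. \]
   Context: $\circ$ denotes concatenation. For a word $\mathfrak{s}$, $\mathsf{P}(\mathfrak{s})$ is the number of distinct words that are subsequences (not necessarily contiguous) of $\mathfrak{s}$, the empty word included. $\mathsf{P}^{\mathsf{A}}(\mathfrak{s})$ (resp. $\mathsf{P}^{\mathsf{B}}(\mathfrak{s})$) is the number of distinct subsequences of $\mathfrak{s}$ that start with $\mathsf{A}$ (resp. $\mathsf{B}$), plus one for the empty subsequence; $\mathsf{P}_{\mathsf{A}}(\mathfrak{s})$ (resp. $\mathsf{P}_{\mathsf{B}}(\mathfrak{s})$) is the number of distinct subsequences of $\mathfrak{s}$ that end with $\mathsf{A}$ (resp. $\mathsf{B}$), plus one for the empty subsequence. *)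

From HB Require Import structures.
From mathcomp Require Import all_boot.
Set Implicit Arguments. Unset Strict Implicit. Unset Printing Implicit Defensive.

Inductive letter := A | B.

Definition letter_eqb (x y : letter) : bool :=
  match x, y with A, A | B, B => true | _, _ => false end.
Lemma letter_eqP : Equality.axiom letter_eqb.
Proof. by case; case; constructor. Qed.
HB.instance Definition _ := hasDecEq.Build letter letter_eqP.

Definition word := seq letter.

Fixpoint subseqs (s : word) : seq word :=
  match s with
  | [::] => [:: [::]]
  | x :: s' => [seq x :: w | w <- subseqs s'] ++ subseqs s'
  end.

Definition dsubseqs (s : word) : seq word := undup (subseqs s).

(* P(s): number of distinct subsequences, empty one included. *)
Definition Pc (s : word) : nat := size (dsubseqs s).

Definition starts_with (a : letter) (w : word) : bool :=
  if w is x :: _ then x == a else false.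
Definition ends_with (a : letter) (w : word) : bool :=
  if w is x :: w' then last x w' == a else false.

(* P^a(s): distinct subsequences starting with a, plus one (empty). *)
Definition Pstart (a : letter) (s : word) : nat :=
  (count (starts_with a) (dsubseqs s)).+1.
(* P_a(s): distinct subsequences ending with a, plus one (empty). *)
Definition Pend (a : letter) (s : word) : nat :=
  (count (ends_with a) (dsubseqs s)).+1.

Lemma mem_subseqs (s w : word) : (w \in subseqs s) = subseq w s.
Proof.
elim: s w => [|x s IH] w; first by case: w.
rewrite /= mem_cat IH; case: w => [|y w] /=; first by rewrite sub0seq orbT.
case: eqP => [->|ne].
  apply/orP/idP => [[/mapP[v vin [->]]|h]|h].
  - by rewrite -IH.
  - exact: subseq_trans (subseq_cons w x) h.
  - by left; apply/mapP; exists w; rewrite ?IH.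
have -> : (y :: w \in [seq x :: w0 | w0 <- subseqs s]) = false.
  by apply/negbTE/mapP => -[v _ [e _]]; case: ne.
by [].
Qed.

From mathcomp Require Import all_boot zify.

(* Induction on [t]: moving the first letter [x] of [t] to the end of [s]
   leaves the right-hand side unchanged, because the distinct subsequences of
   [x :: t] starting with [x] are [x] followed by a distinct subsequence of
   [t] (so P^x(x t) = P(t) + 1), while those starting with the other letter are
   unaffected; dually for P_x(s x).  The identity P(u) + 1 = P^A(u) + P^B(u)
   = P_A(u) + P_B(u) then closes both the base case and the inductive step. *)

Lemma mem_dsubseqs (s w : word) : (w \in dsubseqs s) = subseq w s.
Proof. by rewrite mem_undup mem_subseqs. Qed.

Lemma perm_dsubseqs_rev (s : word) :
  perm_eq (dsubseqs (rev s)) (map rev (dsubseqs s)).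
Proof.
have rev_inj : injective (@rev letter) := can_inj revK.
apply: uniq_perm; first exact: undup_uniq.
  by rewrite (map_inj_uniq rev_inj) undup_uniq.
move=> w; rewrite -{2}[w]revK (mem_map rev_inj).
by rewrite !mem_dsubseqs -subseq_rev revK.
Qed.

Lemma perm_dsubseqs_cons (x : letter) (t : word) :
  perm_eq (dsubseqs (x :: t))
    (map (cons x) (dsubseqs t) ++ [seq w <- dsubseqs t | ~~ starts_with x w]).
Proof.
have cons_inj : injective (cons x) by move=> u v [].
apply: uniq_perm; first exact: undup_uniq.
  rewrite cat_uniq (map_inj_uniq cons_inj) filter_uniq ?undup_uniq //= andbT.
  apply/hasPn => w; rewrite mem_filter => /andP[xw _].
  by apply/mapP => -[u _ wE]; rewrite wE /= eqxx in xw.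
move=> [|y w]; rewrite mem_cat mem_filter !mem_dsubseqs /=.
  by rewrite sub0seq orbT.
case: eqVneq => [->|neq_yx] /=.
  by rewrite (mem_map cons_inj) mem_dsubseqs orbF.
by case: mapP => [[u _ [yx _]]|_]; first by rewrite yx eqxx in neq_yx.
Qed.

Lemma Pc_rev (s : word) : Pc (rev s) = Pc s.
Proof. by rewrite /Pc (perm_size (perm_dsubseqs_rev s)) size_map. Qed.

Lemma ends_with_rev (a : letter) (w : word) :
  ends_with a w = starts_with a (rev w).
Proof.
case/lastP: w => [|v z] //; rewrite rev_rcons /=.
by case: v => [|y v] //=; rewrite last_rcons.
Qed.

Lemma Pend_rev (a : letter) (s : word) : Pend a s = Pstart a (rev s).
Proof.
rewrite /Pend /Pstart (permP (perm_dsubseqs_rev s)) count_map.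
by congr S; apply: eq_count => w; rewrite /= ends_with_rev.
Qed.

Lemma Pstart_nil (a : letter) : Pstart a [::] = 1.
Proof. by []. Qed.

Lemma Pstart_cons (x : letter) (t : word) : Pstart x (x :: t) = (Pc t).+1.
Proof.
rewrite /Pstart /Pc (permP (perm_dsubseqs_cons x t)) count_cat count_map.
rewrite (eq_count (a2 := predT)) ?count_predT => [|w]; last by rewrite /= eqxx.
rewrite count_filter (eq_count (a2 := pred0)) ?count_pred0 ?addn0 // => w.
by rewrite /= andbN.
Qed.

Lemma Pstart_cons_neq (x y : letter) (t : word) :
  x != y -> Pstart y (x :: t) = Pstart y t.
Proof.
move=> /negbTE neq_xy.
rewrite /Pstart (permP (perm_dsubseqs_cons x t)) count_cat count_map.
rewrite (eq_count (a2 := pred0)) ?count_pred0 => [|w]; last by rewrite /= neq_xy.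
rewrite add0n count_filter (eq_count (a2 := starts_with y)) // => -[|z w] //=.
by case: (eqVneq z y) => [->|] //=; rewrite eq_sym neq_xy.
Qed.

Lemma Pend_rcons (s : word) (x : letter) : Pend x (rcons s x) = (Pc s).+1.
Proof. by rewrite Pend_rev rev_rcons Pstart_cons Pc_rev. Qed.

Lemma Pend_rcons_neq (s : word) (x y : letter) :
  x != y -> Pend y (rcons s x) = Pend y s.
Proof. by move=> neq_xy; rewrite !Pend_rev rev_rcons Pstart_cons_neq. Qed.

Lemma size_by_head (l : seq word) :
  size l =
    count (starts_with A) l + count (starts_with B) l + count (pred1 [::]) l.
Proof.
elim: l => [|w l IH] //=; rewrite IH.
by case: w => [|[] w] /=; rewrite ?addnS ?addSn.
Qed.

Lemma Pc_Pstart (t : word) : (Pc t).+1 = Pstart A t + Pstart B t.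
Proof.
have nil_once : count (pred1 [::]) (dsubseqs t) = 1.
  by rewrite count_uniq_mem ?undup_uniq // mem_dsubseqs sub0seq.
by rewrite /Pc /Pstart size_by_head nil_once addn1 addnS addSn.
Qed.

Lemma Pc_Pend (s : word) : (Pc s).+1 = Pend A s + Pend B s.
Proof. by rewrite !Pend_rev -Pc_Pstart Pc_rev. Qed.

Theorem theorem2 (s t : word) :
  Pc (s ++ t) = Pend A s * Pstart B t + Pend B s * Pstart A t - 1.
Proof.
elim: t s => [|x t IH] s.
  by rewrite cats0 !Pstart_nil !muln1 -Pc_Pend subn1.
rewrite -cat_rcons IH; case: x.
- rewrite Pend_rcons (@Pend_rcons_neq _ A B) // Pstart_cons (@Pstart_cons_neq A B) //.
  by rewrite Pc_Pend Pc_Pstart; lia.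
- rewrite Pend_rcons (@Pend_rcons_neq _ B A) // Pstart_cons (@Pstart_cons_neq B A) //.
  by rewrite Pc_Pend Pc_Pstart; lia.
Qed.
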